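(* Let $q\ge 2$ be a prime power, $m\ge 1$, $n=q^m-1$, and suppose $n=r_1r_2$ with integers $r_1,r_2>1$ and $\gcd(r_1,r_2)=1$. Let $a$ be the multiplicative order of $q$ modulo $r_1$; then $a\mid m$. Fix a generator $\alpha$ of the multiplicative group $\mathbb{F}_{q^m}^*$ and a group isomorphism $T:\mathbb{Z}_n\to\mathbb{Z}_{r_1}\times\mathbb{Z}_{r_2}$. Let $$\Gamma=\left\{(i_1,i_2)\in\mathbb{Z}_{r_1}\times\mathbb{Z}_{r_2}\ \middle|\ 0\le i_1<a,\ 0\le i_2<\frac{m}{a}\right\}.$$ Then $T^{-1}(\Gamma)\subseteq\mathbb{Z}_n$ is a set of check positions for the punctured code $R^*_q(m(q-1)-2,m)$; that is, the set of coordinates $\{\alpha^i\mid i\in T^{-1}(\Gamma)\}$ is a set of check positions of $R^*_q(m(q-1)-2,m)$.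
   Context: $\mathbb{F}=\mathbb{F}_q$. Elements of $\mathbb{Z}_r$ are identified with the integers $0,\dots,r-1$. For a natural number $k$ with $q$-ary expansion $k=\sum_{r\ge0}k_rq^r$, $k_r\in\{0,\dots,q-1\}$, its $q$-weight is $\mathrm{wt}_q(k)=\sum_r k_r$. Let $G$ be the additive group of $\mathbb{F}_{q^m}$; a word of length $q^m$ is a vector $(c_g)_{g\in G}\in\mathbb{F}^G$, written $bX^0+\sum_{i=0}^{n-1}a_iX^{\alpha^i}$ (coordinate $0$ has entry $b$, coordinate $\alpha^i$ has entry $a_i$). For $0<\rho\le m(q-1)$, the generalized Reed–Muller code $R_q(\rho,m)$ is the set of words $bX^0+\sum_i a_iX^{\alpha^i}$ such that $b\cdot 0^s+\sum_{i=0}^{n-1}a_i\alpha^{is}=0$ for every integer $s$ with $0\le s<q^m-1$ and $\mathrm{wt}_q(s)<m(q-1)-\rho$ (convention $0^0=1$). The punctured code $R^*_q(\rho,m)$ is obtained from $R_q(\rho,m)$ by deleting the coordinate $X^0$; its coordinates are $\alpha^0,\dots,\alpha^{n-1}$, indexed by $i\in\mathbb{Z}_n$. For a linear code $C$ of dimension $k$ with coordinate set $P$, an information set is $I\subseteq P$ with $|I|=k$ such that the projection of $C$ onto the coordinates in $I$ is all of $\mathbb{F}^{k}$; a set of check positions is the complement $P\setminus I$ of an information set. *)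

From HB Require Import structures.
From mathcomp Require Import all_boot all_order all_algebra all_field.
Set Implicit Arguments. Unset Strict Implicit. Unset Printing Implicit Defensive.
Import GRing.Theory.
Local Open Scope ring_scope.

(* q-ary weight (digit sum) of k: sum of the base-q digits k_r = (k / q^r) mod q.
   For q >= 2, q^r > k for r > k, so digits r <= k suffice. *)
Definition wt_q (q k : nat) : nat := (\sum_(r < k.+1) (k %/ q ^ r %% q))%N.

(* Words of length q^m: coordinate X^0 carries b, coordinate alpha^i carries a i,
   for i in Z_n, n = q^m - 1.  F = F_q is embedded in K = F_{q^m} via f.
   (b, a) is in R_q(rho, m) iff for every 0 <= s < q^m - 1 with
   wt_q(s) < m(q-1) - rho:  b * 0^s + sum_i a_i alpha^(i s) = 0  (0^0 = 1). *)
Definition RM_word (F K : fieldType) (f : {rmorphism F -> K}) (alpha : K)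
    (q m rho : nat) (b : F) (a : {ffun 'Z_(q ^ m - 1) -> F^o}) : bool :=
  [forall s : 'I_(q ^ m - 1),
     (wt_q q s < m * (q - 1) - rho)%N ==>
     (f b * 0 ^+ s + \sum_(i : 'Z_(q ^ m - 1)) f (a i) * alpha ^+ (i * s)%N == 0)].

(* The punctured code R*_q(rho, m): delete coordinate X^0, i.e. the projection
   {a | exists b, (b, a) in R_q(rho, m)}; as a subspace of F^(Z_n) it is the
   span of this (already linear) set. *)
Definition punctured_RM (F K : finFieldType) (f : {rmorphism F -> K}) (alpha : K)
    (q m rho : nat) : {vspace {ffun 'Z_(q ^ m - 1) -> F^o}} :=
  <<[seq a <- enum {: {ffun 'Z_(q ^ m - 1) -> F^o}}
        | [exists b : F, @RM_word F K f alpha q m rho b a]]>>%VS.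

Definition information_set (F : fieldType) (I : finType)
    (C : {vspace {ffun I -> F^o}}) (S : {set I}) : Prop :=
  #|S| = \dim C /\
  forall y : {ffun I -> F^o}, exists2 c, c \in C & forall i, i \in S -> c i = y i.

Definition check_positions (F : fieldType) (I : finType)
    (C : {vspace {ffun I -> F^o}}) (J : {set I}) : Prop :=
  information_set C (~: J).

From HB Require Import structures.
From mathcomp Require Import all_boot all_order all_algebra all_field.
From mathcomp Require Import cyclic zify.

Set Implicit Arguments.
Unset Strict Implicit.
Unset Printing Implicit Defensive.

(* Put n = q^m - 1 and S = T^-1.  As wt_q s < 2 forces s = 0 or s = q^j,
   the code R*_q(m(q-1)-2, m) is the kernel of the map
   c |-> sum_i c_i alpha^i from F_q^n onto F_{q^m}: the checks at s = q^j are
   Frobenius images of the check at s = 1, and the check at s = 0 is met by a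
   suitable entry on the deleted coordinate.  Hence T^-1(Gamma) is a set of
   check positions once the elements alpha^(S(u,v)) = beta^u gamma^v, u < a,
   v < m/a, form an F_q-basis of F_{q^m}, where beta = alpha^(S(1,0)) has order
   r1 and gamma = alpha^(S(0,1)).  Since a is the order of q modulo r1, F_q(beta)
   has degree a; every nonzero element is some beta^u gamma^v, so gamma has
   degree m/a over F_q(beta) and the family is the basis of the tower
   F_q < F_q(beta) < F_q(beta, gamma) = F_{q^m}. *)

Lemma order_modn_dvdn (q r a m : nat) : 0 < a -> q ^ a = 1 %[mod r] ->
    (forall b, 0 < b -> q ^ b = 1 %[mod r] -> a <= b) ->
  q ^ m = 1 %[mod r] -> a %| m.
Proof.
move=> a_gt0 qa a_min qm; apply: contraT; rewrite /dvdn -lt0n => m_a_gt0.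
suff /(a_min _ m_a_gt0) : q ^ (m %% a) = 1 %[mod r] by rewrite leqNgt ltn_mod a_gt0.
move: qm; rewrite {1}(divn_eq m a) mulnC expnD expnM.
by rewrite -modnMml -modnXm qa modnXm exp1n modnMml mul1n.
Qed.

Lemma totient_leq n : totient n <= n.
Proof.
rewrite totient_count_coprime.
apply: (@leq_trans (\sum_(0 <= d < n) 1)); first by apply: leq_sum => d _; apply: leq_b1.
by rewrite sum_nat_const_nat subn0 muln1.
Qed.

Lemma order_modn_leq (q r a : nat) : 0 < r -> coprime q r ->
  (forall b, 0 < b -> q ^ b = 1 %[mod r] -> a <= b) -> a <= r.
Proof.
move=> r_gt0 co_qr a_min; apply: leq_trans (totient_leq r).
by apply: a_min; [rewrite totient_gt0 | exact: Euler_exp_totient].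
Qed.

(* [Q ^ e - 1 = (Q - 1) * (1 + Q + ... + Q ^ e.-1) >= (Q - 1) * e] *)
Lemma leq_cofactor_pred_expn (Q e r s : nat) : 1 < Q ->
  Q ^ e - 1 = r * s -> r %| Q - 1 -> e <= s.
Proof.
move=> Q_gt1 def_rs r_dvd; have r_gt0 : 0 < r.
  by apply: contraTT r_dvd; rewrite -eqn0Ngt => /eqP->; rewrite dvd0n subn_eq0 -ltnNge.
rewrite -(leq_pmul2l r_gt0) -def_rs subn1 predn_exp -subn1.
apply: leq_mul; first by apply: dvdn_leq; rewrite // subn_gt0.
rewrite -[leqLHS]card_ord -sum1_card; apply: leq_sum => i _.
by rewrite expn_gt0 ltnW.
Qed.

(* [wt_q q s] is [digit_sum q s.+1 s]. *)
Definition digit_sum (q B s : nat) : nat := \sum_(r < B) (s %/ q ^ r %% q).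

Lemma digit_sumS q B s : digit_sum q B.+1 s = s %% q + digit_sum q B (s %/ q).
Proof.
rewrite /digit_sum big_ord_recl expn0 divn1; congr (_ + _).
by apply: eq_bigr => r _; rewrite expnS divnMA.
Qed.

Lemma digit_sum_eq0 q B s : 1 < q -> s < q ^ B -> digit_sum q B s = 0 -> s = 0.
Proof.
move=> q_gt1; elim: B s => [|B IHB] s; first by rewrite expn0 ltnS leqn0 => /eqP.
rewrite digit_sumS expnSr -ltn_divLR ?(ltnW q_gt1) // => s_lt /eqP.
rewrite addn_eq0 => /andP[/eqP s_mod /eqP/(IHB _ s_lt) s_div].
by rewrite (divn_eq s q) s_div s_mod.
Qed.

Lemma digit_sum_le1 q B s : 1 < q -> 0 < s -> s < q ^ B ->
  digit_sum q B s <= 1 -> exists j, s = q ^ j.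
Proof.
move=> q_gt1; elim: B s => [|B IHB] s s_gt0.
  by rewrite expn0 ltnS leqn0 => /eqP s0; rewrite s0 in s_gt0.
rewrite digit_sumS expnSr -ltn_divLR ?(ltnW q_gt1) // => s_lt.
have def_s := divn_eq s q.
case: (s %% q) def_s => [|[|//]] def_s.
  have sq_gt0 : 0 < s %/ q.
    by move: s_gt0; rewrite {1}def_s addn0 muln_gt0 => /andP[].
  rewrite add0n => /(IHB _ sq_gt0 s_lt)[j def_sq].
  by exists j.+1; rewrite {1}def_s def_sq addn0 expnSr.
rewrite add1n ltnS leqn0 => /eqP/(digit_sum_eq0 q_gt1 s_lt) sq0.
by exists 0; rewrite {1}def_s sq0.
Qed.

Lemma wt_q_lt2 q s : 1 < q -> 0 < s -> wt_q q s < 2 -> exists j, s = q ^ j.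
Proof.
move=> q_gt1 s_gt0; apply: digit_sum_le1 => //.
by apply: leq_trans (ltn_expl s q_gt1) _; rewrite leq_exp2l.
Qed.

Lemma wt_q1 q : 1 < q -> wt_q q 1 = 1.
Proof.
move=> q_gt1; change (digit_sum q 2 1 = 1).
by rewrite !digit_sumS /digit_sum big_ord0 modn_small ?divn_small ?div0n ?mod0n.
Qed.

Import GRing.Theory.
Local Open Scope ring_scope.

Lemma expr_sum_pchar (R : comNzRingType) (N : nat) I (r : seq I) (P : pred I)
    (F : I -> R) :
  [pchar R].-nat N -> (\sum_(i <- r | P i) F i) ^+ N = \sum_(i <- r | P i) F i ^+ N.
Proof.
move=> pcharN; have N_gt0 : (0 < N)%N by case/andP: pcharN.
apply: (big_morph (fun x : R => x ^+ N)); first by move=> x y; rewrite exprDn_pchar.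
by rewrite expr0n eqn0Ngt N_gt0.
Qed.

Lemma expr_expn_fix (R : nzRingType) (c : R) (p k : nat) :
  c ^+ p = c -> c ^+ (p ^ k) = c.
Proof.
by move=> cp; elim: k => [|k IHk]; rewrite ?expr1 // expnSr exprM IHk cp.
Qed.

Lemma pnat_pchar_expn (R : nzRingType) (p k : nat) :
  p \in [pchar R] -> [pchar R].-nat (p ^ k)%N.
Proof.
move=> pcR; rewrite (eq_pnat _ (pcharf_eq pcR)) pnatX pnat_id //.
exact: pcharf_prime pcR.
Qed.

Lemma card_finField_pchar (F K : finFieldType) (f : {rmorphism F -> K}) (p : nat) :
  p \in [pchar K] -> #|F| = (p ^ logn p #|F|)%N.
Proof.
move=> pcK; have pcF : p \in [pchar F] by rewrite -(fmorph_pchar f).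
exact: card_pprimeChar pcF.
Qed.

Lemma pnat_card_finField (F K : finFieldType) (f : {rmorphism F -> K}) (k : nat) :
  [pchar K].-nat (#|F| ^ k)%N.
Proof.
have [p _ pcK] := finPcharP K.
by rewrite (card_finField_pchar f pcK) -expnM pnat_pchar_expn.
Qed.

Section WordEval.

Variables (F K : fieldType) (f : {rmorphism F -> K}) (alpha : K) (n : nat).

Definition word_eval (c : {ffun 'Z_n -> F^o}) : K :=
  \sum_(i : 'Z_n) f (c i) * alpha ^+ i.

Fact word_eval_is_nmod_morphism : nmod_morphism word_eval.
Proof.
split=> [|c d]; first by rewrite /word_eval big1 // => i _; rewrite ffunE rmorph0 mul0r.
by rewrite -big_split; apply: eq_bigr => i _; rewrite ffunE rmorphD mulrDl.
Qed.

HB.instance Definition _ := GRing.isNmodMorphism.Build {ffun 'Z_n -> F^o} K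
  word_eval word_eval_is_nmod_morphism.

Lemma word_evalZ k c : word_eval (k *: c) = f k * word_eval c.
Proof. by rewrite mulr_sumr; apply: eq_bigr => i _; rewrite ffunE rmorphM mulrA. Qed.

End WordEval.

Lemma word_eval_frobenius (F K : finFieldType) (f : {rmorphism F -> K}) alpha n
    (c : {ffun 'Z_n -> F^o}) (j : nat) :
  word_eval f alpha c ^+ (#|F| ^ j) =
    \sum_(i : 'Z_n) f (c i) * alpha ^+ (i * #|F| ^ j)%N.
Proof.
rewrite expr_sum_pchar ?(pnat_card_finField f) //; apply: eq_bigr => i _.
by rewrite exprMn -rmorphXn expr_expn_fix ?expf_card // -exprM.
Qed.

Section PuncturedRM.

Variables (F K : finFieldType) (f : {rmorphism F -> K}) (alpha : K) (q m : nat).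
Hypotheses (cardF : #|F| = q) (n_gt1 : (1 < q ^ m - 1)%N).

Local Notation rho := (m * (q - 1) - 2)%N.

Let q_gt1 : (1 < q)%N. Proof. by rewrite -cardF finNzRing_gt1. Qed.

Let wt_lt2 s : (wt_q q s < m * (q - 1) - rho)%N = (wt_q q s < 2)%N.
Proof.
rewrite subKn //; case: m n_gt1 => [|[|m']]; rewrite ?expn0 ?expn1 //; nia.
Qed.

Lemma RM_word_eval b c :
  @RM_word F K f alpha q m rho b c -> word_eval f alpha c = 0.
Proof.
move=> /forallP/(_ (Ordinal n_gt1))/implyP; rewrite wt_lt2 wt_q1 // => /(_ isT)/eqP.
by rewrite mulr0 add0r => <-; apply: eq_bigr => i _; rewrite muln1.
Qed.

Lemma RM_word_of_eval c :
  word_eval f alpha c = 0 -> @RM_word F K f alpha q m rho (- \sum_i c i) c.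
Proof.
move=> c0; apply/forallP => s; apply/implyP; rewrite wt_lt2.
have [-> _ | s_gt0 /(wt_q_lt2 q_gt1 s_gt0)[j ->]] := posnP s.
  rewrite mulr1 rmorphN rmorph_sum addrC subr_eq0.
  by apply/eqP/eq_bigr => i _; rewrite muln0 mulr1.
rewrite expr0n eqn0Ngt expn_gt0 (ltnW q_gt1) mulr0 add0r.
have := word_eval_frobenius f alpha c j.
by rewrite cardF c0 expr0n expn_eq0 gtn_eqF ?(ltnW q_gt1) // => <-.
Qed.

Lemma mem_punctured_RM c :
  (c \in punctured_RM f alpha q m rho) = (word_eval f alpha c == 0).
Proof.
apply/idP/eqP => [c_in | c0]; last first.
  apply: memv_span; rewrite mem_filter mem_enum memvf andbT.
  by apply/existsP; exists (- \sum_i c i); apply: RM_word_of_eval.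
rewrite (coord_span (X := in_tuple _) c_in) raddf_sum big1 // => i _.
rewrite /= word_evalZ; have := mem_nth 0 (ltn_ord i).
by rewrite mem_filter => /andP[/existsP[b /RM_word_eval->] _]; rewrite mulr0.
Qed.

End PuncturedRM.

Section KernelCheckPositions.

Variables (F : finFieldType) (I : finType).
Local Notation word := {ffun I -> F^o}.
Local Notation words_on D := (pffun_on (0 : F^o) D predT).

Lemma words_onP (D : {pred I}) (x : word) :
  reflect (forall i, i \notin D -> x i = 0) (x \in words_on D).
Proof.
apply: (iffP pffun_onP) => [[/subsetP x_supp _] i | x_supp].
  by apply: contraNeq => x_i; apply: x_supp; rewrite inE.
by split=> //; apply/subsetP => i; rewrite inE; apply: contraR => /x_supp->.
Qed.

Lemma card_words_on (D : {pred I}) : #|words_on D| = (#|F| ^ #|D|)%N.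
Proof. by rewrite card_pffun_on. Qed.

Variables (V : finZmodType) (phi : {additive word -> V}).
Variables (C : {vspace word}) (J : {set I}).
Hypotheses (memC : forall c, (c \in C) = (phi c == 0))
  (cardV : #|V| = (#|F| ^ #|J|)%N)
  (phi_J_eq0 : forall x, x \in words_on J -> phi x = 0 -> x = 0).

Let words_onB (D : {pred I}) (x y : word) :
  x \in words_on D -> y \in words_on D -> x - y \in words_on D.
Proof.
move=> /words_onP x_D /words_onP y_D; apply/words_onP => i i_D.
by rewrite !ffunE x_D ?y_D ?subr0.
Qed.

Lemma phi_onto v : exists2 x, x \in words_on J & phi x = v.
Proof.
have phi_inj : {in words_on J &, injective phi}.
  move=> x y x_J y_J /eqP; rewrite -subr_eq0 -raddfB => /eqP.
  by move/(phi_J_eq0 (words_onB x_J y_J))/eqP; rewrite subr_eq0 => /eqP.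
have /setP/(_ v) : phi @: words_on J = [set: V].
  apply/eqP; rewrite eqEcard subsetT card_in_imset // card_words_on -cardV cardsT.
  exact: leqnn.
by rewrite inE => /imsetP[x x_J ->]; exists x.
Qed.

Lemma kernel_extend (w : word) :
  exists2 c, c \in C & forall i, i \notin J -> c i = w i.
Proof.
have [x /words_onP x_J phi_x] := phi_onto (- phi w).
exists (w + x); first by rewrite memC raddfD phi_x addrN.
by move=> i i_J; rewrite ffunE x_J ?addr0.
Qed.

Lemma check_positions_kernel : check_positions C J.
Proof.
split=> [|y]; last first.
  by have [c c_C c_y] := kernel_extend y; exists c => // i; rewrite inE; apply: c_y.
pose restr (c : word) : word := [ffun i => if i \in J then 0 else c i].
have restr_inj : {in C &, injective restr}.
  move=> c d c_C d_C /ffunP restr_cd; apply/eqP; rewrite -subr_eq0; apply/eqP.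
  move: c_C d_C; rewrite !memC => /eqP phi_c /eqP phi_d.
  apply: phi_J_eq0; last by rewrite raddfB phi_c phi_d subrr.
  apply/words_onP => i i_J; have := restr_cd i; rewrite !ffunE (negbTE i_J) => ->.
  by rewrite subrr.
have restr_C : restr @: C =i words_on (~: J).
  move=> w; apply/imsetP/words_onP => [[c _ ->] i | w_J].
    by rewrite inE negbK ffunE => ->.
  have [c c_C c_w] := kernel_extend w; exists c => //; apply/ffunP => i.
  by rewrite ffunE; case: ifP => [i_J | /negbT/c_w//]; rewrite w_J // inE negbK.
apply: (expnI (finNzRing_gt1 F)).
by rewrite -card_vspace -(card_in_imset restr_inj) (eq_card restr_C) card_words_on.
Qed.

End KernelCheckPositions.

Section FrobeniusFixedAdjoin.

Variables (F0 : fieldType) (L : fieldExtType F0) (N : nat).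
Hypothesis pcharN : [pchar L].-nat N.

Lemma Fadjoin_fixed (E : {subfield L}) (x : L) :
    {in E, forall c, c ^+ N = c} -> x ^+ N = x ->
  {in <<E; x>>%VS, forall z, z ^+ N = z}.
Proof.
move=> E_fix x_fix _ /Fadjoin_polyP[p /polyOverP Ep ->].
rewrite horner_coef expr_sum_pchar //; apply: eq_bigr => i _.
by rewrite exprMn E_fix // -exprM mulnC exprM x_fix.
Qed.

Lemma Fadjoin_seq_fixed (E : {subfield L}) (xs : seq L) :
    {in E, forall c, c ^+ N = c} -> {in xs, forall x, x ^+ N = x} ->
  {in <<E & xs>>%VS, forall z, z ^+ N = z}.
Proof.
elim: xs E => [|x xs IHxs] E E_fix xs_fix; first by rewrite Fadjoin_nil.
rewrite adjoin_cons; apply: (IHxs <<E; x>>%AS) => [|y y_xs].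
  by apply: Fadjoin_fixed => //; apply: xs_fix; rewrite mem_head.
by apply: xs_fix; rewrite inE y_xs orbT.
Qed.

End FrobeniusFixedAdjoin.

Lemma card_fixed_expr (R : finIdomainType) (S : {pred R}) (N : nat) :
  (1 < N)%N -> {in S, forall x, x ^+ N = x} -> (#|S| <= N)%N.
Proof.
move=> N_gt1 S_fix; have size_XNX : size ('X^N - 'X : {poly R}) = N.+1.
  by rewrite size_polyDl ?size_polyXn // size_polyN size_polyX.
rewrite cardE -ltnS -size_XNX max_poly_roots ?enum_uniq //.
  by rewrite -size_poly_eq0 size_XNX.
apply/allP => x; rewrite mem_enum => /S_fix x_fix.
by rewrite /root !hornerE x_fix subrr.
Qed.

Section AdjoinFree.

Variables (F0 : fieldType) (L : fieldExtType F0).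

Lemma Fadjoin_free (E : {subfield L}) (x : L) (c : nat -> L) :
    (forall u, c u \in E) -> \sum_(u < adjoin_degree E x) c u * x ^+ u = 0 ->
  forall u, (u < adjoin_degree E x)%N -> c u = 0.
Proof.
move=> Ec sum0 u lt_u; pose p := \poly_(i < adjoin_degree E x) c i.
have Ep : p \is a polyOver E.
  by apply/polyOverP => i; rewrite coef_poly; case: ifP; rewrite ?mem0v.
have /(Fadjoin_poly_unique Ep (size_poly _ _)) : p.[x] = 0 by rewrite horner_poly.
by rewrite linear0 => /(congr1 (coefp u))/esym; rewrite /= coef_poly lt_u coef0.
Qed.

Lemma Fadjoin_tower_free (E : {subfield L}) (x y : L) (c : nat -> nat -> L) :
    (forall u v, c u v \in E) ->
    \sum_(u < adjoin_degree E x) \sum_(v < adjoin_degree <<E; x>>%AS y)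
      c u v * (x ^+ u * y ^+ v) = 0 ->
  forall u v, (u < adjoin_degree E x)%N -> (v < adjoin_degree <<E; x>>%AS y)%N ->
  c u v = 0.
Proof.
move=> Ec sum0 u v lt_u lt_v.
pose d v := \sum_(u < adjoin_degree E x) c u v * x ^+ u.
have Ed v' : d v' \in <<E; x>>%AS.
  apply: rpred_sum => i _; rewrite rpredM ?rpredX ?memv_adjoin //.
  exact: subvP (subv_adjoin E x) _ (Ec _ _).
suff /(Fadjoin_free (fun u => Ec u v)) : d v = 0 by apply.
apply: Fadjoin_free lt_v => //; rewrite -[RHS]sum0 exchange_big /=.
by apply: eq_bigr => v' _; rewrite mulr_suml; apply: eq_bigr => u' _; rewrite mulrA.
Qed.

End AdjoinFree.

(* [L] is [K] viewed as a field extension of its prime field 'F_p. *)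
Section FiniteFieldTower.

Variables (p : nat) (K : finFieldType) (pcK : p \in [pchar K]).
Local Notation L := (pPrimeCharType pcK).
Implicit Types (E : {subfield L}) (x : L).

Let p_pr : prime p. Proof. exact: pcharf_prime pcK. Qed.

Lemma card_subfield E : #|E| = (p ^ \dim E)%N.
Proof. by rewrite card_vspace card_Fp. Qed.

Lemma subfield_fixed E : {in E, forall x, x ^+ #|E| = x}.
Proof. by move=> x; rewrite Fermat's_little_theorem card_vspace => /eqP. Qed.

Lemma card_Fadjoin E x : #|<<E; x>>%VS| = (#|E| ^ adjoin_degree E x)%N.
Proof. by rewrite !card_vspace dim_Fadjoin mulnC expnM. Qed.

Lemma adjoin_degree_frobenius E x (d : nat) :
    (0 < d)%N -> x ^+ (#|E| ^ d) = x ->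
    (forall d', (0 < d')%N -> x ^+ (#|E| ^ d') = x -> (d <= d')%N) ->
  adjoin_degree E x = d.
Proof.
move=> d_gt0 x_fix d_min; have E_gt1 : (1 < #|E|)%N.
  by rewrite card_subfield -(expn0 p) ltn_exp2l ?prime_gt1 ?adim_gt0.
have le_d : (d <= adjoin_degree E x)%N.
  apply: d_min => //; rewrite -card_Fadjoin.
  exact: subfield_fixed <<E; x>>%AS _ (memv_adjoin E x).
apply/eqP; rewrite eqn_leq le_d andbT -(leq_exp2l _ _ E_gt1) -card_Fadjoin.
apply: card_fixed_expr; first by rewrite -(expn0 #|E|) ltn_exp2l.
apply: Fadjoin_fixed => // [|c /subfield_fixed]; last exact: expr_expn_fix.
by rewrite card_subfield -expnM pnat_pchar_expn.
Qed.

Lemma subfield_image (F : finFieldType) (f : {rmorphism F -> K}) :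
  exists2 E : {subfield L}, #|E| = #|F| & forall y, (f y : L) \in E.
Proof.
pose E : {subfield L} := <<1 & [seq (f y : L) | y <- enum F]>>%AS.
have fE y : (f y : L) \in E by apply/seqv_sub_adjoin/map_f; rewrite mem_enum.
have cardF := card_finField_pchar f pcK.
exists E => //; apply/eqP; rewrite eqn_leq; apply/andP; split.
  apply: card_fixed_expr (finNzRing_gt1 F) _.
  apply: Fadjoin_seq_fixed => [|c /subfield_fixed|_ /mapP[y _ ->]].
  - by rewrite cardF pnat_pchar_expn.
  - by rewrite card_subfield dimv1 expn1 cardF; apply: expr_expn_fix.
  - by rewrite -rmorphXn expf_card.
rewrite -(card_imset _ (fmorph_inj f)); apply: subset_leq_card.
by apply/subsetP => _ /imsetP[y _ ->].
Qed.

End FiniteFieldTower.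

Lemma tower_monomials_free (F K : finFieldType) (f : {rmorphism F -> K})
    (a e : nat) (b g : K) :
    #|K| = (#|F| ^ (a * e))%N -> (0 < a)%N -> b ^+ (#|F| ^ a) = b ->
    (forall d, (0 < d)%N -> b ^+ (#|F| ^ d) = b -> (a <= d)%N) ->
    (forall x, x != 0 -> exists u v, x = b ^+ u * g ^+ v) ->
  forall c : nat -> nat -> F,
    \sum_(u < a) \sum_(v < e) f (c u v) * (b ^+ u * g ^+ v) = 0 ->
  forall u v, (u < a)%N -> (v < e)%N -> c u v = 0.
Proof.
move=> cardK a_gt0 b_fix b_min bg_gen c sum0 u v lt_u lt_v.
have [p _ pcK] := finPcharP K.
have [E card_E fE] := subfield_image pcK f.
rewrite -card_E in cardK b_fix b_min; pose L := pPrimeCharType pcK.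
have deg_b : adjoin_degree E (b : L) = a by apply: adjoin_degree_frobenius.
have full : <<<<E; (b : L)>>%AS; (g : L)>>%VS = fullv.
  apply/vspaceP => x; rewrite memvf.
  have [-> | /bg_gen[i [j ->]]] := eqVneq x 0; first exact: mem0v.
  rewrite rpredM ?rpredX ?memv_adjoin //.
  by apply: (subvP (subv_adjoin _ _)); apply: memv_adjoin.
have deg_g : adjoin_degree <<E; (b : L)>>%AS (g : L) = e.
  have := card_Fadjoin <<E; (b : L)>>%AS (g : L).
  rewrite full card_vspacef card_Fadjoin deg_b -expnM cardK.
  by rewrite card_E => /(expnI (finNzRing_gt1 F))/eqP; rewrite eqn_pmul2l // => /eqP.
apply/eqP; rewrite -(fmorph_eq0 f); apply/eqP.
move: lt_u lt_v; rewrite -deg_b -deg_g.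
by apply: (Fadjoin_tower_free (fun u v => fE (c u v))); rewrite deg_b deg_g.
Qed.

Lemma expr_Zp_addr (R : nzRingType) (x : R) (n : nat) (i j : 'Z_n) :
  (1 < n)%N -> x ^+ n = 1 -> x ^+ (i + j)%R = x ^+ i * x ^+ j.
Proof.
move=> n_gt1 x_n; rewrite -exprD -[RHS](@expr_mod _ (Zp_trunc n).+2) //.
by rewrite Zp_cast.
Qed.

Lemma expf_card_pred (K : finFieldType) (x : K) : x != 0 -> x ^+ #|K|.-1 = 1.
Proof.
move=> x_neq0; apply: (mulfI x_neq0); rewrite mulr1 -exprS prednK ?expf_card //.
exact: ltnW (finNzRing_gt1 K).
Qed.

Lemma generator_expr_neq1 (K : finFieldType) (alpha : K) :
    (forall x, x != 0 -> exists i, x = alpha ^+ i) ->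
  forall j, (0 < j < #|K|.-1)%N -> alpha ^+ j != 1.
Proof.
move=> alpha_gen j /andP[j_gt0 j_lt]; apply: contraTneq j_lt => alpha_j.
rewrite -leqNgt -(cardsC1 0) -[j in (_ <= j)%N]card_ord -cardsT.
apply: (leq_trans _ (leq_imset_card (fun i : 'I_j => alpha ^+ i) _)).
apply/subset_leq_card/subsetP => x; rewrite !inE => /alpha_gen[i ->].
by apply/imsetP; exists (Ordinal (ltn_pmod i j_gt0)); rewrite ?inE ?expr_mod.
Qed.

Lemma val_Zp_nat_small (r u : nat) :
  (1 < r)%N -> (u < r)%N -> (u%:R : 'Z_r) = u :> nat.
Proof. by move=> r_gt1 u_lt; rewrite val_Zp_nat ?modn_small. Qed.

Section CheckPositions.

Variables (F K : finFieldType) (f : {rmorphism F -> K}).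
Variables (q m r1 r2 a : nat) (alpha : K).
Local Notation n := (q ^ m - 1)%N.
Local Notation e := (m %/ a)%N.
Variables (T : 'Z_n -> 'Z_r1 * 'Z_r2) (S : 'Z_r1 * 'Z_r2 -> 'Z_n).
Hypotheses (cardF : #|F| = q) (cardK : #|K| = (q ^ m)%N) (m_gt0 : (0 < m)%N)
  (n_eq : n = (r1 * r2)%N) (r1_gt1 : (1 < r1)%N) (r2_gt1 : (1 < r2)%N)
  (a_gt0 : (0 < a)%N) (qa : (q ^ a = 1 %[mod r1])%N)
  (a_min : forall b, (0 < b)%N -> (q ^ b = 1 %[mod r1])%N -> (a <= b)%N)
  (alpha_neq0 : alpha != 0)
  (alpha_gen : forall x : K, x != 0 -> exists i : nat, x = alpha ^+ i)
  (TD : {morph T : x y / x + y}) (TK : cancel T S) (ST : cancel S T).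

Let n_gt1 : (1 < n)%N.
Proof. by rewrite n_eq (leq_trans r2_gt1) // leq_pmull // ltnW. Qed.

Let qm_mod : (q ^ m = 1 %[mod r1])%N.
Proof.
have qm_gt0 : (0 < q ^ m)%N by rewrite (leq_trans _ (leq_subr 1 _)) // ltnW.
by rewrite -(subnK qm_gt0) n_eq mulnC modnMDl.
Qed.

Lemma order_dvd_m : (a %| m)%N.
Proof. exact: order_modn_dvdn a_gt0 qa a_min qm_mod. Qed.

Let a_le_r1 : (a <= r1)%N.
Proof.
apply: order_modn_leq (ltnW r1_gt1) _ a_min.
by rewrite -(coprime_pexpl _ _ m_gt0) -coprime_modl qm_mod modn_small // coprime1n.
Qed.

Let q_gt1 : (1 < q)%N. Proof. by rewrite -cardF finNzRing_gt1. Qed.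

Let e_le_r2 : (e <= r2)%N.
Proof.
apply: (@leq_cofactor_pred_expn (q ^ a) _ r1).
- by rewrite -(expn0 q) ltn_exp2l.
- by rewrite -expnM mulnC divnK ?order_dvd_m.
- by rewrite -eqn_mod_dvd ?expn_gt0 ?(ltnW q_gt1) // qa.
Qed.

Let S_add : {morph S : x y / x + y}.
Proof. by move=> x y; apply: (can_inj TK); rewrite TD !ST. Qed.

Let S0 : S 0 = 0.
Proof. by apply: (addrI (S 0)); rewrite -S_add !addr0. Qed.

Let chi (x : 'Z_r1 * 'Z_r2) : K := alpha ^+ S x.

Let alpha_n : alpha ^+ n = 1.
Proof. by rewrite -cardK subn1 expf_card_pred. Qed.

Let chiD x y : chi (x + y) = chi x * chi y.
Proof. by rewrite /chi S_add expr_Zp_addr. Qed.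

Let chiMn x k : chi (x *+ k) = chi x ^+ k.
Proof.
elim: k => [|k IHk]; first by rewrite mulr0n expr0 /chi S0.
by rewrite mulrSr chiD IHk exprSr.
Qed.

Let chi_eq1 x : (chi x == 1) = (x == 0).
Proof.
rewrite -(inj_eq (can_inj ST)) S0; have [Sx0 | Sx_neq0] := eqVneq (S x) 0.
  by rewrite /chi Sx0 expr0 eqxx.
apply/negbTE/generator_expr_neq1 => //; rewrite lt0n cardK -subn1.
by rewrite -[X in (_ < X)%N](Zp_cast n_gt1) ltn_ord andbT.
Qed.

Let beta := chi (1, 0).
Let gamma := chi (0, 1).

Let chi_nat u v : chi (u%:R, v%:R) = beta ^+ u * gamma ^+ v.
Proof.
have -> : (u%:R, v%:R) = (1, 0) *+ u + (0, 1) *+ v :> 'Z_r1 * 'Z_r2.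
  rewrite !pairMnE /= !mul0rn.
  by apply/eqP; rewrite eqE /= addr0 add0r !eqxx.
by rewrite chiD !chiMn.
Qed.

Let beta_exp_eq1 t : (beta ^+ t == 1) = (r1 %| t)%N.
Proof.
rewrite -chiMn chi_eq1 pairMnE /= mul0rn xpair_eqE eqxx andbT.
by rewrite -val_eqE /= val_Zp_nat.
Qed.

Let beta_frobenius d : (beta ^+ (q ^ d) == beta) = (q ^ d == 1 %[mod r1])%N.
Proof.
have qd_gt0 : (0 < q ^ d)%N by rewrite expn_gt0 ltnW.
have beta_neq0 : beta != 0 by rewrite expf_neq0.
rewrite -[in LHS](subnK qd_gt0) exprD expr1 -[X in _ == X]mul1r.
by rewrite (inj_eq (mulIf beta_neq0)) beta_exp_eq1 eqn_mod_dvd.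
Qed.

Let beta_gamma_span x : x != 0 -> exists u v, x = beta ^+ u * gamma ^+ v.
Proof.
move=> /alpha_gen[i ->]; have -> : alpha = chi (T 1) by rewrite /chi TK.
case: (T 1) => u v; rewrite -{1}[u]natr_Zp -{1}[v]natr_Zp chi_nat.
by exists (u * i)%N, (v * i)%N; rewrite exprMn !exprM.
Qed.

Let h (u v : nat) : 'Z_n := S (u%:R, v%:R).
Local Notation J := [set i | ((T i).1 < a)%N && ((T i).2 < e)%N].

Let T_h u v : T (h u v) = (u%:R, v%:R). Proof. exact: ST. Qed.

Let box_val1 (u : 'I_a) : ((u : nat)%:R : 'Z_r1) = u :> nat.
Proof. exact: val_Zp_nat_small r1_gt1 (leq_trans (ltn_ord u) a_le_r1). Qed.

Let box_val2 (v : 'I_e) : ((v : nat)%:R : 'Z_r2) = v :> nat.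
Proof. exact: val_Zp_nat_small r2_gt1 (leq_trans (ltn_ord v) e_le_r2). Qed.

Let h_box_inj : injective (fun w : 'I_a * 'I_e => h w.1 w.2).
Proof.
move=> [u v] [u' v'] /(congr1 T); rewrite !T_h => -[/(congr1 val) + /(congr1 val)].
by rewrite /= !box_val1 !box_val2 => eq_u eq_v; congr pair; apply: val_inj.
Qed.

Let J_box : J = [set h w.1 w.2 | w : 'I_a * 'I_e].
Proof.
apply/setP => i; rewrite inE; apply/andP/imsetP => [[i_a i_e] | [[u v] _ ->]].
  exists (Ordinal i_a, Ordinal i_e) => //=.
  by rewrite /h !natr_Zp -surjective_pairing TK.
by rewrite T_h /= box_val1 box_val2.
Qed.

Let card_J : #|J| = m.
Proof.
by rewrite J_box card_imset // card_prod !card_ord mulnC divnK ?order_dvd_m.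
Qed.

Let word_eval_J (x : {ffun 'Z_n -> F^o}) : x \in pffun_on 0 J predT ->
  word_eval f alpha x =
    \sum_(u < a) \sum_(v < e) f (x (h u v)) * (beta ^+ u * gamma ^+ v).
Proof.
move=> /words_onP x_J; rewrite /word_eval (bigID [in J]) /=.
rewrite [X in _ + X]big1 ?addr0 => [|i /x_J->]; last by rewrite rmorph0 mul0r.
rewrite J_box big_imset /=; last by move=> w1 w2 _ _ /h_box_inj.
by rewrite pair_big /=; apply: eq_big => [w|[u v] _]; rewrite ?inE // -chi_nat.
Qed.

Let word_eval_J_eq0 (x : {ffun 'Z_n -> F^o}) : x \in pffun_on 0 J predT ->
  word_eval f alpha x = 0 -> x = 0.
Proof.
move=> x_J; rewrite word_eval_J // => sum0; apply/ffunP => i; rewrite ffunE.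
have [|/words_onP-> //] := boolP (i \in J); rewrite J_box => /imsetP[[u v] _ ->].
apply: (tower_monomials_free (c := fun u v => x (h u v)) _ a_gt0 _ _
  beta_gamma_span sum0 (ltn_ord u) (ltn_ord v)).
- by rewrite cardK cardF mulnC divnK ?order_dvd_m.
- by apply/eqP; rewrite cardF beta_frobenius; apply/eqP.
- by move=> d d_gt0 /eqP; rewrite cardF beta_frobenius => /eqP/a_min->.
Qed.

Lemma check_positions_J :
  check_positions (punctured_RM f alpha q m (m * (q - 1) - 2)) J.
Proof.
apply: (check_positions_kernel (phi := word_eval f alpha (n := n))).
- by move=> c; rewrite mem_punctured_RM.
- by rewrite card_J cardK cardF.
- exact: word_eval_J_eq0.
Qed.

End CheckPositions.

Theorem mainTheorem1 (F K : finFieldType) (f : {rmorphism F -> K})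
    (q m r1 r2 a : nat) (alpha : K)
    (T : 'Z_(q ^ m - 1) -> 'Z_r1 * 'Z_r2) :
  #|F| = q -> (0 < m)%N -> #|K| = (q ^ m)%N ->
  (q ^ m - 1)%N = (r1 * r2)%N -> (1 < r1)%N -> (1 < r2)%N -> coprime r1 r2 ->
  (* a is the multiplicative order of q modulo r1 *)
  (0 < a)%N -> (q ^ a = 1 %[mod r1])%N ->
  (forall b : nat, (0 < b)%N -> (q ^ b = 1 %[mod r1])%N -> (a <= b)%N) ->
  (* alpha generates the multiplicative group of K *)
  alpha != 0 -> (forall x : K, x != 0 -> exists i : nat, x = alpha ^+ i) ->
  (* T is a group isomorphism Z_n -> Z_r1 x Z_r2 *)
  (forall x y, T (x + y) = T x + T y) -> bijective T ->
  (a %| m)%N /\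
  check_positions (punctured_RM f alpha q m (m * (q - 1) - 2))
    [set i | ((T i).1 < a)%N && ((T i).2 < m %/ a)%N].
Proof.
(* coprimality of r1 and r2 is implied by the existence of T *)
move=> cardF m_gt0 cardK n_eq r1_gt1 r2_gt1 _ a_gt0 qa a_min alpha_neq0 alpha_gen.
move=> TD [S TK ST]; split; first exact: order_dvd_m n_eq r1_gt1 r2_gt1 a_gt0 qa a_min.
exact: check_positions_J cardF cardK m_gt0 n_eq r1_gt1 r2_gt1 a_gt0 qa a_min
  alpha_neq0 alpha_gen TD TK ST.
Qed.
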